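(* Consider $N$ sub-operators $\mathcal{R}^{[i]}$, $i\in\mathcal{V}=\{1,\dots,N\}$, each with $\mathcal{L}_2$-gain at most $\gamma^{[i]}>0$ (dissipative with respect to the supply $s^{[i]}$ in the context), interconnected via matrices $M_{vz},M_{vw},M_{uz}$ satisfying Assumption 2, and let $\gamma_R>0$. For each $i$, let $b^{[i]}\in\mathbb{R}$ be arbitrary and set $$\alpha^{[i]}=h^{[i]}+\max_{j\in\mathcal{A}_{z_i}}\Big(\sum_{k=1}^{q}|m_{kj}|\Big)+\big(b^{[i]}\big)^2,$$ assumed to be $>0$. Choose $$\gamma^{[i]}=\begin{cases}\left(\dfrac{1}{\alpha^{[i]}}\min\left\{\dfrac{\gamma_R^2}{\max_{j\in\mathcal{A}^1_{u_i}}\big(\sum_{k=1}^r|m_{jk}|\big)\gamma_R^2+1},\ \dfrac{1}{\max_{j\in\mathcal{A}^0_{u_i}}\big(\sum_{k=1}^r|m_{jk}|\big)}\right\}\right)^{1/2}, & i\in\mathcal{V}^1,\\[3ex] \left(\dfrac{1}{\alpha^{[i]}\max_{j\in\mathcal{A}^0_{u_i}}\big(\sum_{k=1}^r|m_{jk}|\big)}\right)^{1/2}, & i\notin\mathcal{V}^1,\end{cases}$$ where, for $i\in\mathcal{V}^1$ with $\mathcal{A}^0_{u_i}=\emptyset$ or with $\max_{j\in\mathcal{A}^0_{u_i}}\sum_k|m_{jk}|=0$, the second entry of the minimum is omitted, and for $i\notin\mathcal{V}^1$ it is assumed that $\max_{j\in\mathcal{A}^0_{u_i}}\sum_k|m_{jk}|>0$.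 Then, with these $\alpha^{[i]}$ and $\gamma^{[i]}$, the matrix inequality $$\begin{bmatrix} M_{vz} & M_{vw}\\ I & 0\\ 0 & I\\ M_{uz} & 0\end{bmatrix}^{\top}\begin{bmatrix}\mathrm{blkdiag}(\Pi_{N,v},-\Pi_{N,z}) & 0\\ 0 & -S\end{bmatrix}\begin{bmatrix} M_{vz} & M_{vw}\\ I & 0\\ 0 & I\\ M_{uz} & 0\end{bmatrix}\preceq 0$$ holds, for every choice of the free parameters $b^{[i]}$ (and of any further parameters of the sub-operators that do not affect their gain bound $\gamma^{[i]}$). Consequently the interconnected operator $\mathcal{R}:\widehat{\mathbf{w}}\mapsto\mathbf{u}$ (assumed well posed) lies in $\mathcal{L}_2$, with $\mathcal{L}_2$-gain at most $\gamma_R$.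
   Context: Sub-operators: $\mathcal{R}^{[i]}:l^{q_i}\to l^{r_i}$ with state-space form $\xi^{[i]}_{t+1}=\rho^{[i]}(\xi^{[i]}_t,v^{[i]}_t)$, $z^{[i]}_t=\chi^{[i]}(\xi^{[i]}_t,v^{[i]}_t)$, having $\mathcal{L}_2$-gain at most $\gamma^{[i]}$ in the sense that there is a nonnegative storage function $V^{[i]}$ with $V^{[i]}(\xi^{[i]}_{t+1})-V^{[i]}(\xi^{[i]}_t)\le \gamma^{[i]2}|v^{[i]}_t|^2-|z^{[i]}_t|^2$ for all $t$. (In the paper these are Recurrent Equilibrium Networks, whose parametrization guarantees gain at most any prescribed $\gamma^{[i]}$ for all values of their parameters.) Stacked signals: $v=\mathrm{col}(v^{[1]},\dots,v^{[N]})\in\mathbb{R}^q$, $z=\mathrm{col}(z^{[1]},\dots,z^{[N]})\in\mathbb{R}^r$, $\widehat{w}\in\mathbb{R}^n$, $u\in\mathbb{R}^m$, interconnected by $v=M_{vz}z+M_{vw}\widehat{w}$, $u=M_{uz}z$, with $M_{vz}\in\mathbb{R}^{q\times r}$, $M_{vw}\in\mathbb{R}^{q\times n}$, $M_{uz}\in\mathbb{R}^{m\times r}$. An operator is in $\mathcal{L}_2$ if it is causal and maps square-summable sequences to square-summable sequences. Assumption 2: (a) there is a permutation matrix $C\in\{0,1\}^{q\times q}$ with $CM_{vw}=\begin{bmatrix}I_n\\ 0_{(q-n)\times n}\end{bmatrix}$; (b) $M_{uz}^\top M_{uz}=H=\mathrm{diag}(h)$ for some $h\in\mathbb{R}^r$.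 Notation: $m_{jk}$ denotes the $(j,k)$ entry of $M_{vz}$. $\mathcal{A}_{u_i}\subseteq\{1,\dots,q\}$ is the set of indices of the components of $v$ forming $v^{[i]}$; $\mathcal{A}_{z_i}\subseteq\{1,\dots,r\}$ is the set of indices of the components of $z$ forming $z^{[i]}$. $\mathcal{A}^1_{u_i}=\{k\in\mathcal{A}_{u_i}:(M_{vw}\mathbf{1})_k=1\}$ and $\mathcal{A}^0_{u_i}=\{k\in\mathcal{A}_{u_i}:(M_{vw}\mathbf{1})_k=0\}$, where $\mathbf{1}$ is the all-ones vector. $\mathcal{V}^1=\{i\in\mathcal{V}:\mathcal{A}^1_{u_i}\neq\emptyset\}$ (the out-connected sub-operators). $h^{[i]}=\max_{j\in\mathcal{A}_{z_i}}h_j$. $S=\mathrm{blkdiag}(\gamma_R^2I_n,-I_m)$, $\Pi_{N,v}=\mathrm{blkdiag}(\alpha^{[1]}\gamma^{[1]2}I_{q_1},\dots,\alpha^{[N]}\gamma^{[N]2}I_{q_N})$, $\Pi_{N,z}=\mathrm{blkdiag}(\alpha^{[1]}I_{r_1},\dots,\alpha^{[N]}I_{r_N})$. *)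

From mathcomp Require Import all_boot all_order all_algebra.
Set Implicit Arguments. Unset Strict Implicit. Unset Printing Implicit Defensive.
Import Order.TTheory GRing.Theory Num.Theory.
Local Open Scope ring_scope.

Definition nsd {R : numDomainType} {k : nat} (A : 'M[R]_k) : Prop :=
  forall x : 'cV[R]_k, (x^T *m A *m x) 0 0 <= 0.

Definition sqnorm {R : numDomainType} {k : nat} (x : 'cV[R]_k) : R :=
  \sum_(i < k) x i 0 ^+ 2.

(* maximum of F over the elements satisfying P; 0 if there are none
   (all maxima used below are maxima of nonnegative quantities). *)
Definition bmax {R : realDomainType} {I : finType} (P : pred I) (F : I -> R) : R :=
  \big[Num.max/0]_(i | P i) F i.

(* Components of v are assigned to sub-operators by blkv : 'I_q -> 'I_N
   (A_{u_i} = {k | blkv k = i}); components of z by blkz : 'I_r -> 'I_N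
   (A_{z_i} = {j | blkz j = i}). *)

Definition Mw1 {R : realDomainType} {q n : nat} (Mvw : 'M[R]_(q, n)) (k : 'I_q) : R :=
  \sum_(l < n) Mvw k l.

Definition colabs {R : realDomainType} {q r : nat} (Mvz : 'M[R]_(q, r)) (j : 'I_r) : R :=
  \sum_(k < q) `|Mvz k j|.

Definition rowabs {R : realDomainType} {q r : nat} (Mvz : 'M[R]_(q, r)) (j : 'I_q) : R :=
  \sum_(k < r) `|Mvz j k|.

Definition alpha {R : realDomainType} {N q r : nat} (blkz : 'I_r -> 'I_N)
  (Mvz : 'M[R]_(q, r)) (h : 'rV[R]_r) (b : 'I_N -> R) (i : 'I_N) : R :=
  bmax (fun j => blkz j == i) (fun j => h 0 j)
  + bmax (fun j => blkz j == i) (colabs Mvz) + b i ^+ 2.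

Definition inV1 {R : realDomainType} {N q n : nat} (blkv : 'I_q -> 'I_N)
  (Mvw : 'M[R]_(q, n)) (i : 'I_N) : bool :=
  [exists k, (blkv k == i) && (Mw1 Mvw k == 1)].

Definition amax1 {R : realDomainType} {N q r n : nat} (blkv : 'I_q -> 'I_N)
  (Mvz : 'M[R]_(q, r)) (Mvw : 'M[R]_(q, n)) (i : 'I_N) : R :=
  bmax (fun k => (blkv k == i) && (Mw1 Mvw k == 1)) (rowabs Mvz).

Definition amax0 {R : realDomainType} {N q r n : nat} (blkv : 'I_q -> 'I_N)
  (Mvz : 'M[R]_(q, r)) (Mvw : 'M[R]_(q, n)) (i : 'I_N) : R :=
  bmax (fun k => (blkv k == i) && (Mw1 Mvw k == 0)) (rowabs Mvz).

Definition gamma {R : rcfType} {N q r n : nat} (blkv : 'I_q -> 'I_N) (blkz : 'I_r -> 'I_N)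
  (Mvz : 'M[R]_(q, r)) (Mvw : 'M[R]_(q, n)) (h : 'rV[R]_r) (b : 'I_N -> R)
  (gR : R) (i : 'I_N) : R :=
  let a := alpha blkz Mvz h b i in
  let a1 := amax1 blkv Mvz Mvw i in
  let a0 := amax0 blkv Mvz Mvw i in
  Num.sqrt
    (if inV1 blkv Mvw i then
       a^-1 * (if 0 < a0 then Num.min (gR ^+ 2 / (a1 * gR ^+ 2 + 1)) a0^-1
               else gR ^+ 2 / (a1 * gR ^+ 2 + 1))
     else (a * a0)^-1).

Definition Piv {R : rcfType} {N q r n : nat} (blkv : 'I_q -> 'I_N) (blkz : 'I_r -> 'I_N)
  (Mvz : 'M[R]_(q, r)) (Mvw : 'M[R]_(q, n)) (h : 'rV[R]_r) (b : 'I_N -> R) (gR : R)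
  : 'M[R]_q :=
  diag_mx (\row_k (alpha blkz Mvz h b (blkv k)
                    * gamma blkv blkz Mvz Mvw h b gR (blkv k) ^+ 2)).

Definition Piz {R : rcfType} {N q r : nat} (blkz : 'I_r -> 'I_N)
  (Mvz : 'M[R]_(q, r)) (h : 'rV[R]_r) (b : 'I_N -> R) : 'M[R]_r :=
  diag_mx (\row_j alpha blkz Mvz h b (blkz j)).

Definition Smx {R : ringType} (n m : nat) (gR : R) : 'M[R]_(n + m) :=
  block_mx (gR ^+ 2)%:M 0 0 (- 1%:M).

Definition Mbig {R : ringType} {q r n m : nat} (Mvz : 'M[R]_(q, r)) (Mvw : 'M[R]_(q, n))
  (Muz : 'M[R]_(m, r)) : 'M[R]_((q + r) + (n + m), r + n) :=
  col_mx (col_mx (row_mx Mvz Mvw) (row_mx 1%:M 0))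
         (col_mx (row_mx 0 1%:M) (row_mx Muz 0)).

Definition LMImx {R : rcfType} {N q r n m : nat} (blkv : 'I_q -> 'I_N) (blkz : 'I_r -> 'I_N)
  (Mvz : 'M[R]_(q, r)) (Mvw : 'M[R]_(q, n)) (Muz : 'M[R]_(m, r)) (h : 'rV[R]_r)
  (b : 'I_N -> R) (gR : R) : 'M[R]_(r + n) :=
  (Mbig Mvz Mvw Muz)^T
  *m block_mx (block_mx (Piv blkv blkz Mvz Mvw h b gR) 0 0 (- Piz blkz Mvz h b)) 0
              0 (- Smx n m gR)
  *m Mbig Mvz Mvw Muz.

(* v^[i], zero-padded: the components of a in A_{u_i}, other components set to 0 *)
Definition resv {R : ringType} {N q : nat} (blkv : 'I_q -> 'I_N) (i : 'I_N)
  (a : 'cV[R]_q) : 'cV[R]_q :=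
  \col_k (if blkv k == i then a k 0 else 0).

Definition sqnorm_blk {R : numDomainType} {N k : nat} (blk : 'I_k -> 'I_N) (i : 'I_N)
  (a : 'cV[R]_k) : R :=
  \sum_(l < k | blk l == i) a l 0 ^+ 2.

From Pilot Require Import Defs.
From mathcomp Require Import all_boot all_order all_algebra.
From mathcomp Require Import perm ring lra.
Import Order.TTheory GRing.Theory Num.Theory.
Set Implicit Arguments. Unset Strict Implicit. Unset Printing Implicit Defensive.
Local Open Scope ring_scope.

(* Weighting the dissipation inequality of the i-th sub-operator by alpha^[i]
   and summing makes sum_i alpha^[i] V^[i] a storage function of the
   interconnection as soon as the LMI holds, and the LMI is checked row by
   row.  By Assumption 2 each v_k is (M_vz z)_k on A^0 rows and
   (M_vz z)_k + w_l on A^1 rows.  Cauchy-Schwarz with weights |m_kj| bounds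
   (M_vz z)_k^2 by (sum_j |m_kj|) (sum_j |m_kj| z_j^2); the choice of gamma^[i]
   makes alpha^[i] gamma^[i]^2 small enough to absorb the row sum (and, on A^1
   rows, the cross term with w_l into gamma_R^2 w_l^2).  Summing over k turns
   the row weights into column sums of |M_vz|, which alpha^[i] - h dominates. *)

Lemma le_bmax (R : realDomainType) (I : finType) (P : pred I) (F : I -> R) j :
  P j -> F j <= bmax P F.
Proof.
rewrite /bmax => Pj.
have : j \in index_enum I by rewrite mem_index_enum.
elim: (index_enum I) => [|a s IH] //=; rewrite in_cons big_cons.
case/orP => [/eqP <-|Hs]; first by rewrite Pj le_max lexx.
by case: ifP => _; [rewrite le_max IH ?orbT | exact: IH].
Qed.

Lemma bmax_ge0 (R : realDomainType) (I : finType) (P : pred I) (F : I -> R) :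
  0 <= bmax P F.
Proof.
rewrite /bmax; elim: (index_enum I) => [|a s IH]; first by rewrite big_nil.
by rewrite big_cons; case: ifP => _ //; rewrite le_max IH orbT.
Qed.

Lemma sum_nat_delta (R : pzSemiRingType) (n : nat) (j : 'I_n) (c : 'I_n -> R) :
  \sum_(i < n) ((i : nat) == j)%:R * c i = c j.
Proof.
rewrite (bigD1 j) //= eqxx mul1r big1 ?addr0 // => i /negPf.
by rewrite -val_eqE => ->; rewrite mul0r.
Qed.

Lemma sum_nat_delta_out (R : pzSemiRingType) (n a : nat) (c : 'I_n -> R) :
  (n <= a)%N -> \sum_(i < n) ((i : nat) == a)%:R * c i = 0.
Proof.
move=> le_na; rewrite big1 // => i _.
by rewrite ltn_eqF ?mul0r // (leq_trans (ltn_ord i)).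
Qed.

Lemma weighted_cauchy_schwarz (R : realFieldType) (n : nat) (a c : 'I_n -> R) :
  (forall i, 0 <= a i) ->
  (\sum_i a i * c i) ^+ 2 <= (\sum_i a i) * (\sum_i a i * c i ^+ 2).
Proof.
move=> a_ge0.
set A := \sum_i a i; set B := \sum_i a i * c i; set S := \sum_i a i * c i ^+ 2.
have A_ge0 : 0 <= A by apply: sumr_ge0.
have [A0|A_neq0] := eqVneq A 0.
  have a0 i : a i = 0 by apply: (psumr_eq0P (fun j _ => a_ge0 j) A0).
  by rewrite A0 mul0r /B big1 ?expr0n // => i _; rewrite a0 mul0r.
have var_ge0 : 0 <= \sum_i a i * (c i * A - B) ^+ 2.
  by apply: sumr_ge0 => i _; rewrite mulr_ge0 ?sqr_ge0.
have varE : \sum_i a i * (c i * A - B) ^+ 2 = A * (A * S - B ^+ 2).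
  transitivity (\sum_i (A ^+ 2 * (a i * c i ^+ 2) - (2 * A * B) * (a i * c i)
                        + B ^+ 2 * a i)); first by apply: eq_bigr => i _; ring.
  rewrite big_split sumrB /= -!mulr_sumr -/A -/B -/S; ring.
have A_gt0 : 0 < A by rewrite lt_def A_neq0.
by rewrite -subr_ge0 -(pmulr_rge0 _ A_gt0) -varE.
Qed.

Lemma sqr_sum_le_abs (R : realFieldType) (n : nat) (m z : 'I_n -> R) :
  (\sum_i m i * z i) ^+ 2 <= (\sum_i `|m i|) * (\sum_i `|m i| * z i ^+ 2).
Proof.
have le_abs : (\sum_i m i * z i) ^+ 2 <= (\sum_i `|m i| * `|z i|) ^+ 2.
  rewrite -[X in X <= _]ger0_norm ?sqr_ge0 // normrX lerXn2r ?nnegrE //.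
    by apply: sumr_ge0 => i _; rewrite mulr_ge0.
  by apply: le_trans (ler_norm_sum _ _ _) _; apply: ler_sum => i _; rewrite normrM.
apply: le_trans le_abs _.
rewrite [X in _ <= _ * X](eq_bigr (fun i => `|m i| * `|z i| ^+ 2)).
  exact: weighted_cauchy_schwarz.
by move=> i _; rewrite real_normK ?num_real.
Qed.

Lemma scaled_sqr_le (R : realFieldType) (p c y S : R) :
  0 <= p -> p * c <= 1 -> y ^+ 2 <= c * S -> 0 <= S -> p * y ^+ 2 <= S.
Proof. by move=> *; nra. Qed.

Lemma scaled_sqr_addr_le (R : realFieldType) (p c g y W S : R) :
  0 <= c -> 0 < g -> 0 <= p -> p * (c * g + 1) <= g ->
  y ^+ 2 <= c * S -> 0 <= S -> p * (y + W) ^+ 2 <= S + g * W ^+ 2.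
Proof.
move=> c_ge0 g_gt0 p_ge0 pcg_le yS S_ge0.
have [c0|c_neq0] := eqVneq c 0.
  rewrite c0 mul0r in yS pcg_le.
  have -> : y = 0 by apply/eqP; rewrite -sqrf_eq0 eq_le sqr_ge0 yS.
  have := sqr_ge0 W; nra.
have cg_gt0 : 0 < c * g by rewrite mulr_gt0 // lt_def c_neq0.
have young : c * g * (y + W) ^+ 2 <= (c * g + 1) * (y ^+ 2 + c * g * W ^+ 2).
  by rewrite -subr_ge0 (_ : _ - _ = (y - c * g * W) ^+ 2) ?sqr_ge0 //; ring.
rewrite -(ler_pM2l cg_gt0) mulrCA; apply: (le_trans (ler_wpM2l p_ge0 young)).
have pcg_ge0 : 0 <= p * (c * g + 1) by rewrite mulr_ge0 // addr_ge0 ?ltW.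
have SW_ge0 : 0 <= S + g * W ^+ 2 by rewrite addr_ge0 // mulr_ge0 ?sqr_ge0 ?ltW.
rewrite mulrA; apply: (le_trans (ler_wpM2l pcg_ge0 (lerD yS (lexx (c * g * W ^+ 2))))).
rewrite (_ : p * (c * g + 1) * (c * S + c * g * W ^+ 2)
             = c * (p * (c * g + 1)) * (S + g * W ^+ 2)); last by ring.
by rewrite -mulrA -(mulrA c g); apply: ler_wpM2l => //; exact: ler_wpM2r.
Qed.

Lemma quad_block_diag (R : comPzRingType) (k1 k2 : nat) (a : 'cV[R]_k1) (c : 'cV[R]_k2)
    (A : 'M_k1) (B : 'M_k2) :
  (col_mx a c)^T *m block_mx A 0 0 B *m col_mx a c = a^T *m A *m a + c^T *m B *m c.
Proof. by rewrite tr_col_mx mul_row_block !mulmx0 addr0 add0r mul_row_col. Qed.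

Lemma quad_diag_mx (R : comPzRingType) (k : nat) (a : 'cV[R]_k) (d : 'rV[R]_k) :
  a^T *m diag_mx d *m a = (\sum_i d 0 i * a i 0 ^+ 2)%:M.
Proof.
rewrite [LHS]mx11_scalar mul_mx_diag mxE; congr _%:M.
by apply: eq_bigr => i _; rewrite !mxE; ring.
Qed.

Lemma quad_scalar_mx (R : comPzRingType) (k : nat) (a : 'cV[R]_k) (c : R) :
  a^T *m c%:M *m a = (c * \sum_i a i 0 ^+ 2)%:M.
Proof.
rewrite [LHS]mx11_scalar mul_mx_scalar -scalemxAl !mxE !mulr_sumr; congr _%:M.
by apply: eq_bigr => i _; rewrite !mxE expr2.
Qed.

Lemma sqnormE (R : numDomainType) (k : nat) (a : 'cV[R]_k) :
  sqnorm a = (a^T *m a) 0 0.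
Proof. by rewrite /sqnorm mxE; apply: eq_bigr => i _; rewrite !mxE expr2. Qed.

Lemma LMImx_quadE (R : rcfType) (N q r n m : nat)
    (blkv : 'I_q -> 'I_N) (blkz : 'I_r -> 'I_N)
    (Mvz : 'M[R]_(q, r)) (Mvw : 'M[R]_(q, n)) (Muz : 'M[R]_(m, r))
    (h : 'rV[R]_r) (b : 'I_N -> R) (gR : R) (zeta : 'cV[R]_r) (w : 'cV[R]_n) :
  Muz^T *m Muz = diag_mx h ->
  ((col_mx zeta w)^T *m LMImx blkv blkz Mvz Mvw Muz h b gR *m col_mx zeta w) 0 0 =
  \sum_k (alpha blkz Mvz h b (blkv k) * gamma blkv blkz Mvz Mvw h b gR (blkv k) ^+ 2)
           * (Mvz *m zeta + Mvw *m w) k 0 ^+ 2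
  - \sum_j alpha blkz Mvz h b (blkz j) * zeta j 0 ^+ 2
  - gR ^+ 2 * \sum_l w l 0 ^+ 2 + \sum_j h 0 j * zeta j 0 ^+ 2.
Proof.
move=> MuzE.
rewrite /LMImx !mulmxA -trmx_mul -!mulmxA mulmxA.
rewrite /Mbig !mul_col_mx !mul_row_col !mul1mx !mul0mx !addr0 add0r.
rewrite !quad_block_diag /Smx opp_block_mx !oppr0 opprK quad_block_diag.
rewrite mulmx1 trmx_mul -!mulmxA (mulmxA Muz^T) MuzE !mulmxA !mulmxN !mulNmx.
rewrite /Piv /Piz !quad_diag_mx quad_scalar_mx -!(raddfN, raddfD) mxE eqxx mulr1n.
by rewrite addrA; congr (_ - _ - _ + _); apply: eq_bigr => i _; rewrite mxE.
Qed.

Section ChosenGains.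

Variables (R : rcfType) (N q r n : nat).
Variables (blkv : 'I_q -> 'I_N) (blkz : 'I_r -> 'I_N).
Variables (Mvz : 'M[R]_(q, r)) (Mvw : 'M[R]_(q, n)).
Variables (h : 'rV[R]_r) (b : 'I_N -> R) (gR : R).
Hypothesis gR_gt0 : 0 < gR.
Hypothesis alpha_gt0 : forall i, 0 < alpha blkz Mvz h b i.
Hypothesis amax0_gt0 : forall i, ~~ inV1 blkv Mvw i -> 0 < amax0 blkv Mvz Mvw i.

Local Notation alpha := (alpha blkz Mvz h b).
Local Notation gamma := (gamma blkv blkz Mvz Mvw h b gR).
Local Notation amax0 := (amax0 blkv Mvz Mvw).
Local Notation amax1 := (amax1 blkv Mvz Mvw).
Local Notation inV1 := (inV1 blkv Mvw).

Lemma amax1_den_gt0 i : 0 < amax1 i * gR ^+ 2 + 1.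
Proof. by rewrite ltr_pwDr ?ltr01 // mulr_ge0 ?sqr_ge0 ?bmax_ge0. Qed.

Lemma alpha_gamma_sqrE i :
  alpha i * gamma i ^+ 2 =
  if inV1 i then
    (if 0 < amax0 i then Num.min (gR ^+ 2 / (amax1 i * gR ^+ 2 + 1)) (amax0 i)^-1
     else gR ^+ 2 / (amax1 i * gR ^+ 2 + 1))
  else (amax0 i)^-1.
Proof.
have a_gt0 := alpha_gt0 i.
have sqrtK x : 0 <= x -> alpha i * Num.sqrt ((alpha i)^-1 * x) ^+ 2 = x.
  move=> x_ge0; rewrite sqr_sqrtr; first by rewrite mulrA mulfV ?gt_eqF ?mul1r.
  by rewrite mulr_ge0 // invr_ge0 ltW.
have T_ge0 : 0 <= gR ^+ 2 / (amax1 i * gR ^+ 2 + 1).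
  by rewrite divr_ge0 ?sqr_ge0 ?ltW ?amax1_den_gt0.
rewrite /Defs.gamma; case: ifP => [_|/negbT/amax0_gt0 a0_gt0].
  by apply: sqrtK; case: ifP => _; rewrite ?le_min ?T_ge0 ?invr_ge0 ?bmax_ge0.
by rewrite invfM sqrtK ?invr_ge0 ?ltW.
Qed.

Lemma alpha_gamma_sqr_ge0 i : 0 <= alpha i * gamma i ^+ 2.
Proof. by rewrite mulr_ge0 ?sqr_ge0 ?ltW. Qed.

Lemma alpha_gamma_sqr_amax0 i : alpha i * gamma i ^+ 2 * amax0 i <= 1.
Proof.
have a0_ge0 : 0 <= amax0 i := bmax_ge0 _ _.
rewrite alpha_gamma_sqrE; case: ifP => [_|/negbT notV1]; last first.
  by rewrite mulVf ?gt_eqF ?amax0_gt0.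
case: ifP => [a0_gt0|/negbT]; last first.
  rewrite -leNgt => a0_le0.
  have -> : amax0 i = 0 by apply/eqP; rewrite eq_le a0_le0 a0_ge0.
  by rewrite mulr0 ler01.
by rewrite -ler_pdivlMr // div1r ge_min lexx orbT.
Qed.

Lemma alpha_gamma_sqr_amax1 i :
  inV1 i -> alpha i * gamma i ^+ 2 * (amax1 i * gR ^+ 2 + 1) <= gR ^+ 2.
Proof.
move=> V1i; rewrite alpha_gamma_sqrE V1i -ler_pdivlMr ?amax1_den_gt0 //.
by case: ifP => _ //; rewrite ge_min lexx.
Qed.

Variable s : 'S_q.
Hypothesis Mvw_unit_rows : forall k l, Mvw (s k) l = ((k : nat) == (l : nat))%:R.

Lemma mulmx_unit_rowE (w : 'cV[R]_n) k :
  (Mvw *m w) (s k) 0 = \sum_(l < n) ((l : nat) == k)%:R * w l 0.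
Proof. by rewrite mxE; apply: eq_bigr => l _; rewrite Mvw_unit_rows eq_sym. Qed.

Lemma Mw1_cases k :
  Mw1 Mvw k = 1 \/ Mw1 Mvw k = 0 /\ forall w : 'cV[R]_n, (Mvw *m w) k 0 = 0.
Proof.
rewrite -[k](permKV s); set k' := (s^-1)%g k.
have Mw1E : Mw1 Mvw (s k') = (Mvw *m (const_mx 1 : 'cV_n)) (s k') 0.
  by rewrite /Mw1 mxE; apply: eq_bigr => l _; rewrite mxE mulr1.
rewrite Mw1E mulmx_unit_rowE; case: (ltnP k' n) => [lt_k'n|le_nk'].
  by left; rewrite (sum_nat_delta (Ordinal lt_k'n)) mxE.
by right; split=> [|w]; rewrite ?mulmx_unit_rowE sum_nat_delta_out.
Qed.

Lemma sum_sqr_Mvw_le (w : 'cV[R]_n) :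
  \sum_k (Mvw *m w) k 0 ^+ 2 <= \sum_l w l 0 ^+ 2.
Proof.
have deltaE k : (Mvw *m w) (s k) 0 ^+ 2 = \sum_(l < n) ((l : nat) == k)%:R * w l 0 ^+ 2.
  rewrite mulmx_unit_rowE; case: (ltnP k n) => [lt_kn|le_nk].
    by rewrite !(sum_nat_delta (Ordinal lt_kn)).
  by rewrite !sum_nat_delta_out // expr0n.
rewrite (reindex_inj (@perm_inj _ s)) /= (eq_bigr _ (fun k _ => deltaE k)) exchange_big.
apply: ler_sum => l _; rewrite -mulr_suml ler_piMl ?sqr_ge0 //.
case: (ltnP l q) => [lt_lq|le_ql].
  rewrite (eq_bigr (fun k : 'I_q => ((k : nat) == l)%:R * 1)) => [|k _]; last first.
    by rewrite eq_sym mulr1.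
  by rewrite (sum_nat_delta (Ordinal lt_lq)).
by rewrite big1 ?ler01 // => k _; rewrite gtn_eqF // (leq_trans (ltn_ord k)).
Qed.

Lemma alpha_ge_colabs j : h 0 j + colabs Mvz j <= alpha (blkz j).
Proof.
rewrite /Defs.alpha -addrA lerD ?le_bmax // ler_wpDr ?sqr_ge0 //.
by apply: le_bmax.
Qed.

Lemma alpha_gamma_sqr_row_le (zeta : 'cV[R]_r) (w : 'cV[R]_n) k :
  alpha (blkv k) * gamma (blkv k) ^+ 2 * (Mvz *m zeta + Mvw *m w) k 0 ^+ 2
  <= \sum_j `|Mvz k j| * zeta j 0 ^+ 2 + gR ^+ 2 * (Mvw *m w) k 0 ^+ 2.
Proof.
set p := alpha _ * _; set S := \sum_j `|Mvz k j| * _.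
have p_ge0 : 0 <= p := alpha_gamma_sqr_ge0 _.
have S_ge0 : 0 <= S by apply: sumr_ge0 => j _; rewrite mulr_ge0 ?sqr_ge0.
have c_ge0 : 0 <= rowabs Mvz k by apply: sumr_ge0.
have yS : (Mvz *m zeta) k 0 ^+ 2 <= rowabs Mvz k * S.
  by rewrite mxE; apply: sqr_sum_le_abs.
rewrite mxE; case: (Mw1_cases k) => [Mw1k | [Mw0k Mvw_w0]].
  have V1 : inV1 (blkv k) by apply/existsP; exists k; rewrite eqxx Mw1k eqxx.
  have le_a1 : rowabs Mvz k <= amax1 (blkv k) by apply: le_bmax; rewrite eqxx Mw1k eqxx.
  have gR2_gt0 : 0 < gR ^+ 2 by rewrite exprn_gt0.
  apply: (scaled_sqr_addr_le (c := rowabs Mvz k)) => //.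
  apply: le_trans (alpha_gamma_sqr_amax1 V1); apply: ler_wpM2l => //.
  by rewrite lerD2r ler_wpM2r ?sqr_ge0.
have le_a0 : rowabs Mvz k <= amax0 (blkv k) by apply: le_bmax; rewrite eqxx Mw0k eqxx.
rewrite Mvw_w0 addr0 expr0n mulr0 addr0; apply: (scaled_sqr_le p_ge0 _ yS S_ge0).
by apply: le_trans (alpha_gamma_sqr_amax0 (blkv k)); apply: ler_wpM2l.
Qed.

Lemma LMI_quad_le (zeta : 'cV[R]_r) (w : 'cV[R]_n) :
  \sum_k alpha (blkv k) * gamma (blkv k) ^+ 2 * (Mvz *m zeta + Mvw *m w) k 0 ^+ 2
    + \sum_j h 0 j * zeta j 0 ^+ 2
  <= \sum_j alpha (blkz j) * zeta j 0 ^+ 2 + gR ^+ 2 * \sum_l w l 0 ^+ 2.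
Proof.
apply: le_trans (lerD (ler_sum _ (fun k _ => alpha_gamma_sqr_row_le zeta w k)) (lexx _)) _.
rewrite big_split /= -mulr_sumr exchange_big /= addrAC -big_split /=.
apply: lerD; last by rewrite ler_wpM2l ?sqr_ge0 ?sum_sqr_Mvw_le.
apply: ler_sum => j _; rewrite -mulr_suml -mulrDl ler_wpM2r ?sqr_ge0 //.
by rewrite addrC; apply: alpha_ge_colabs.
Qed.

End ChosenGains.

Lemma perm_unit_rows (R : numDomainType) (q n : nat) (Mvw : 'M[R]_(q, n)) :
  (exists C : 'M[R]_q, is_perm_mx C /\
     C *m Mvw = \matrix_(k < q, l < n) (nat_of_ord k == nat_of_ord l)%:R) ->
  exists s : 'S_q, forall k l, Mvw (s k) l = ((k : nat) == (l : nat))%:R.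
Proof.
case=> C [/is_perm_mxP [s ->] CMvw]; exists s => k l.
by move/matrixP: CMvw => /(_ k l); rewrite -row_permE !mxE.
Qed.

Lemma sqnorm_mulmx_diag (R : rcfType) (m r : nat) (Muz : 'M[R]_(m, r)) (h : 'rV[R]_r)
    (x : 'cV[R]_r) :
  Muz^T *m Muz = diag_mx h -> sqnorm (Muz *m x) = \sum_j h 0 j * x j 0 ^+ 2.
Proof.
move=> MuzE; rewrite sqnormE trmx_mul -mulmxA (mulmxA Muz^T) MuzE mulmxA.
by rewrite quad_diag_mx mxE eqxx mulr1n.
Qed.

Lemma sum_sqnorm_blk (R : numDomainType) (N k : nat) (blk : 'I_k -> 'I_N)
    (c : 'I_N -> R) (a : 'I_N -> 'cV[R]_k) (x : 'cV[R]_k) :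
  (forall j, a (blk j) j 0 = x j 0) ->
  \sum_i c i * sqnorm_blk blk i (a i) = \sum_j c (blk j) * x j 0 ^+ 2.
Proof.
move=> ax; rewrite (partition_big blk predT) //=; apply: eq_bigr => i _.
by rewrite mulr_sumr; apply: eq_bigr => j /eqP <-; rewrite ax.
Qed.

Lemma telescope_le (R : realDomainType) (f g E : nat -> R) :
  (forall t, f t + E t.+1 <= g t + E t) ->
  forall T, \sum_(t < T) f t + E T <= \sum_(t < T) g t + E 0%N.
Proof.
move=> step; elim=> [|T IH]; first by rewrite !big_ord0.
by rewrite !big_ord_recr /=; have := step T; lra.
Qed.

Section Interconnection.

Variables (R : rcfType) (N q r n m : nat).
Variables (blkv : 'I_q -> 'I_N) (blkz : 'I_r -> 'I_N).
Variables (Mvz : 'M[R]_(q, r)) (Mvw : 'M[R]_(q, n)) (Muz : 'M[R]_(m, r)).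
Variables (h : 'rV[R]_r) (b : 'I_N -> R) (gR : R).
Variable s : 'S_q.
Hypothesis Mvw_unit_rows : forall k l, Mvw (s k) l = ((k : nat) == (l : nat))%:R.
Hypothesis MuzE : Muz^T *m Muz = diag_mx h.
Hypothesis gR_gt0 : 0 < gR.
Hypothesis alpha_gt0 : forall i, 0 < alpha blkz Mvz h b i.
Hypothesis amax0_gt0 : forall i, ~~ inV1 blkv Mvw i -> 0 < amax0 blkv Mvz Mvw i.

Local Notation alpha := (alpha blkz Mvz h b).
Local Notation gamma := (gamma blkv blkz Mvz Mvw h b gR).

Lemma nsd_LMImx : nsd (LMImx blkv blkz Mvz Mvw Muz h b gR).
Proof.
move=> x; rewrite -(vsubmxK x) LMImx_quadE //.
have := LMI_quad_le gR_gt0 alpha_gt0 amax0_gt0 Mvw_unit_rows (usubmx x) (dsubmx x).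
lra.
Qed.

Variables (X : 'I_N -> Type) (rho : forall i, X i -> 'cV[R]_q -> X i).
Variables (chi : forall i, X i -> 'cV[R]_q -> 'cV[R]_r) (V : forall i, X i -> R).
Arguments rho : clear implicits.
Arguments chi : clear implicits.
Arguments V : clear implicits.
Hypothesis V_dissipative : forall i (x : X i) (a : 'cV[R]_q),
  V i (rho i x (resv blkv i a)) - V i x
    <= gamma i ^+ 2 * sqnorm_blk blkv i a - sqnorm_blk blkz i (chi i x (resv blkv i a)).

Variables (w : nat -> 'cV[R]_n) (xi : forall i, nat -> X i).
Variables (v : nat -> 'cV[R]_q) (z : nat -> 'cV[R]_r) (u : nat -> 'cV[R]_m).
Hypothesis xiS : forall i t, xi i t.+1 = rho i (xi i t) (resv blkv i (v t)).
Hypothesis zE : forall t j,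
  z t j 0 = chi (blkz j) (xi (blkz j) t) (resv blkv (blkz j) (v t)) j 0.
Hypothesis vE : forall t, v t = Mvz *m z t + Mvw *m w t.
Hypothesis uE : forall t, u t = Muz *m z t.

Lemma supply_step t :
  sqnorm (u t) + \sum_i alpha i * V i (xi i t.+1)
  <= gR ^+ 2 * sqnorm (w t) + \sum_i alpha i * V i (xi i t).
Proof.
have diss : \sum_i alpha i * V i (xi i t.+1) - \sum_i alpha i * V i (xi i t)
  <= \sum_i alpha i * gamma i ^+ 2 * sqnorm_blk blkv i (v t)
     - \sum_i alpha i * sqnorm_blk blkz i (chi i (xi i t) (resv blkv i (v t))).
  rewrite -!sumrB; apply: ler_sum => i _; rewrite -mulrA -!mulrBr.
  apply: ler_wpM2l; first exact: ltW.
  by rewrite xiS; apply: V_dissipative.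
rewrite (@sum_sqnorm_blk _ _ _ _ (fun i => alpha i * gamma i ^+ 2) (fun=> v t) (v t))
  // (@sum_sqnorm_blk _ _ _ _ alpha _ (z t)) in diss; last by move=> j; rewrite zE.
have := LMI_quad_le gR_gt0 alpha_gt0 amax0_gt0 Mvw_unit_rows (z t) (w t).
rewrite uE (sqnorm_mulmx_diag _ MuzE) -vE /sqnorm; lra.
Qed.

End Interconnection.

Theorem theorem1 (R : rcfType) (N q r n m : nat)
  (blkv : 'I_q -> 'I_N) (blkz : 'I_r -> 'I_N)
  (Mvz : 'M[R]_(q, r)) (Mvw : 'M[R]_(q, n)) (Muz : 'M[R]_(m, r))
  (h : 'rV[R]_r) (b : 'I_N -> R) (gR : R)
  (* Assumption 2 (a) *)
  (HC : exists C : 'M[R]_q, is_perm_mx C /\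
          C *m Mvw = \matrix_(k < q, l < n) (nat_of_ord k == nat_of_ord l)%:R)
  (* Assumption 2 (b) *)
  (HH : Muz^T *m Muz = diag_mx h)
  (HgR : 0 < gR)
  (Halpha : forall i, 0 < alpha blkz Mvz h b i)
  (Ha0 : forall i, ~~ inV1 blkv Mvw i -> 0 < amax0 blkv Mvz Mvw i)
  (X : 'I_N -> Type)
  (rho : forall i, X i -> 'cV[R]_q -> X i)
  (chi : forall i, X i -> 'cV[R]_q -> 'cV[R]_r)
  (V : forall i, X i -> R)
  (HV0 : forall i x, 0 <= V i x)
  (HVdiss : forall i (x : X i) (a : 'cV[R]_q),
     V i (rho i x (resv blkv i a)) - V i x
       <= gamma blkv blkz Mvz Mvw h b gR i ^+ 2 * sqnorm_blk blkv i a
          - sqnorm_blk blkz i (chi i x (resv blkv i a))) :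
  nsd (LMImx blkv blkz Mvz Mvw Muz h b gR)
  /\
  exists beta : (forall i, X i) -> R,
    forall (w : nat -> 'cV[R]_n) (xi : forall i, nat -> X i)
           (v : nat -> 'cV[R]_q) (z : nat -> 'cV[R]_r) (u : nat -> 'cV[R]_m),
      (forall i t, xi i t.+1 = rho i (xi i t) (resv blkv i (v t))) ->
      (forall t j, z t j 0 =
         chi (blkz j) (xi (blkz j) t) (resv blkv (blkz j) (v t)) j 0) ->
      (forall t, v t = Mvz *m z t + Mvw *m w t) ->
      (forall t, u t = Muz *m z t) ->
      forall T : nat,
        \sum_(t < T) sqnorm (u t)
          <= gR ^+ 2 * \sum_(t < T) sqnorm (w t) + beta (fun i => xi i 0%N).
Proof.
have [s unit_rows] := perm_unit_rows HC.
split; first exact: nsd_LMImx unit_rows HH HgR Halpha Ha0.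
exists (fun x0 => \sum_i alpha blkz Mvz h b i * V i (x0 i)).
move=> w xi v z u xiS zE vE uE T.
have step := supply_step unit_rows HH HgR Halpha Ha0 HVdiss xiS zE vE uE.
have storage_ge0 : 0 <= \sum_i alpha blkz Mvz h b i * V i (xi i T).
  by apply: sumr_ge0 => i _; rewrite mulr_ge0 ?HV0 ?ltW.
have := telescope_le step T; rewrite -mulr_sumr; lra.
Qed.
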